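(* Let the words $C_n$, $D_n$ over $\{1,2\}$ be defined by $C_1=1$, $D_1=2$, $C_{k+1}=C_k\,1\,D_k$, $D_{k+1}=C_k\,2\,D_k$ for $k\ge 1$. Let $n\geq 1$ and $k\geq 1$. The number of occurrences of the subsequence $1^k$ in $C_n$ (i.e. the number of $k$-element sets of positions of $C_n$ all carrying the letter $1$) is $\binom{2^{n-1}}{k}$, and the number of occurrences of the subsequence $2^k$ in $C_n$ is $\binom{2^{n-1}-1}{k}$. Consequently the number of occurrences of the classical pattern $1^k=1\text{-}1\text{-}\cdots\text{-}1$ ($k$ letters) in $C_n$ (i.e. the number of $k$-element sets of positions of $C_n$ all carrying the same letter) equals $$\binom{2^{n-1}}{k}+\binom{2^{n-1}-1}{k},$$ and, provided $k\neq 2^{n-1}$, this equals $\frac{2^n-k}{2^{n-1}-k}\binom{2^{n-1}-1}{k}$.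
   Context: A subsequence occurrence of a word $u=u_1\cdots u_k$ in a word $w=w_1\cdots w_m$ is a choice of indices $i_1<\cdots<i_k$ with $w_{i_j}=u_j$ for all $j$. An occurrence of the (classical) pattern $1\text{-}1\text{-}\cdots\text{-}1$ of length $k$ is a choice of indices $i_1<\cdots<i_k$ such that $w_{i_1}=\cdots=w_{i_k}$. *)

From mathcomp Require Import all_boot all_algebra.
Set Implicit Arguments. Unset Strict Implicit. Unset Printing Implicit Defensive.

(* CD k = (C_{k+1}, D_{k+1}) *)
Fixpoint CD (k : nat) : seq nat * seq nat :=
  match k with
  | 0 => ([:: 1], [:: 2])
  | k'.+1 => let: (c, d) := CD k' in (c ++ 1 :: d, c ++ 2 :: d)
  end.

(* C_n for n >= 1 *)
Definition Cw (n : nat) : seq nat := (CD n.-1).1.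
Definition Dw (n : nat) : seq nat := (CD n.-1).2.

(* Number of subsequence occurrences of u in w: sets of positions i_1<...<i_k
   (listed increasingly by enum) with w_{i_j} = u_j. *)
Definition occ_subseq (w u : seq nat) : nat :=
  #|[set S : {set 'I_(size w)} |
      (#|S| == size u) && ([seq nth 0 w (val i) | i <- enum S] == u)]|.

Definition occ_const_pattern (w : seq nat) (k : nat) : nat :=
  #|[set S : {set 'I_(size w)} |
      (#|S| == k) && [exists a : 'I_(size w), [forall i in S, nth 0 w i == nth 0 w a]]]|.

From mathcomp Require Import all_boot all_algebra.
From mathcomp Require Import zify ring.

Set Implicit Arguments.
Unset Strict Implicit.
Unset Printing Implicit Defensive.

(* C_n has 2^(n-1) ones and 2^(n-1) - 1 twos, so a k-set of positions carrying
   only ones (resp. only twos) is a k-subset of a set of that size; a k-set of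
   equal letters is one or the other, and the closed form is the identity
   m C(m-1, k) = (m - k) C(m, k) with m = 2^(n-1). *)

Definition positions (w : seq nat) (a : nat) : {set 'I_(size w)} :=
  [set i : 'I_(size w) | nth 0 w i == a].

Lemma card_positions (w : seq nat) (a : nat) : #|positions w a| = count_mem a w.
Proof.
rewrite cardsE cardE /enum_mem size_filter.
rewrite -[in RHS](mkseq_nth 0 w) /mkseq -val_enum_ord -map_comp count_map.
by rewrite enumT; apply: eq_count => i; rewrite !inE.
Qed.

Lemma subset_positions (w : seq nat) (S : {set 'I_(size w)}) x a : x \in S ->
  (S \subset positions w a) = (nth 0 w x == a) && (S \subset positions w (nth 0 w x)).
Proof.
move=> Sx; apply/idP/andP => [/subsetP S_a | [/eqP <- //]].
have /S_a := Sx; rewrite inE => /eqP w_x; split; first by rewrite w_x.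
by rewrite w_x; apply/subsetP.
Qed.

Lemma occ_subseq_nseq (w : seq nat) (a k : nat) :
  occ_subseq w (nseq k a) = 'C(count_mem a w, k).
Proof.
rewrite /occ_subseq -card_positions -cards_draws; apply: eq_card => S.
rewrite !inE size_nseq andbC; have [<- | _] := eqVneq #|S| k; last by rewrite !andbF.
rewrite !andbT cardE -(size_map (fun i : 'I_(size w) => nth 0 w i)).
apply/eqP/subsetP => [/all_pred1P /allP S_a i Si | S_a].
  rewrite inE; apply: S_a.
  by apply: (map_f (fun j : 'I_(size w) => nth 0 w j)); rewrite mem_enum.
apply/all_pred1P; rewrite all_map; apply/allP => i.
by rewrite mem_enum => /S_a; rewrite inE.
Qed.

Lemma occ_const_pattern_two_letters (w : seq nat) (a b k : nat) :
  a != b -> {subset w <= [:: a; b]} -> 0 < k ->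
  occ_const_pattern w k = 'C(count_mem a w, k) + 'C(count_mem b w, k).
Proof.
move=> neq_ab w_ab k_gt0.
have constant_subset (S : {set 'I_(size w)}) x : x \in S ->
    [exists c : 'I_(size w), [forall i in S, nth 0 w i == nth 0 w c]]
    = (S \subset positions w (nth 0 w x)).
  move=> Sx; apply/existsP/subsetP => [[c /forall_inP S_c] i Si | S_x].
    by rewrite inE (eqP (S_c i Si)) (eqP (S_c x Sx)).
  by exists x; apply/forall_inP => i /S_x; rewrite inE.
rewrite /occ_const_pattern -!card_positions -!cards_draws -cardsUI.
set drawsA := [set S : {set _} | S \subset positions w a & _].
set drawsB := [set S : {set _} | S \subset positions w b & _].
have -> : drawsA :&: drawsB = set0.
  apply/setP => S; rewrite !inE.
  have [card_S | _] := eqVneq #|S| k; last by rewrite !andbF.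
  have /card_gt0P[x Sx] : 0 < #|S| by rewrite card_S.
  rewrite !andbT (subset_positions a Sx) (subset_positions b Sx).
  by case: eqP => [-> | _] /=; rewrite ?(negbTE neq_ab) ?andbF.
rewrite cards0 addn0; apply: eq_card => S; rewrite !inE.
have [card_S | _] := eqVneq #|S| k; last by rewrite !andbF.
have /card_gt0P[x Sx] : 0 < #|S| by rewrite card_S.
rewrite !andbT (constant_subset _ _ Sx).
rewrite (subset_positions a Sx) (subset_positions b Sx) -andb_orl.
by have := w_ab _ (mem_nth 0 (ltn_ord x)); rewrite !inE => ->.
Qed.

Lemma count_CD j :
  [/\ count_mem 1 (CD j).1 = 2 ^ j, count_mem 2 (CD j).1 = 2 ^ j - 1,
      count_mem 1 (CD j).2 = 2 ^ j - 1 & count_mem 2 (CD j).2 = 2 ^ j].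
Proof.
elim: j => [|j] //=; case: (CD j) => c d /= [c1 c2 d1 d2].
have : 0 < 2 ^ j by rewrite expn_gt0.
by rewrite !count_cat /= c1 c2 d1 d2 expnS; split; lia.
Qed.

Lemma CD_letters j : all [in [:: 1; 2]] ((CD j).1 ++ (CD j).2).
Proof.
elim: j => [|j] //=; case: (CD j) => c d /=.
by rewrite !all_cat /= => /andP[-> ->].
Qed.

Lemma count_Cw n :
  count_mem 1 (Cw n) = 2 ^ n.-1 /\ count_mem 2 (Cw n) = 2 ^ n.-1 - 1.
Proof. by have [] := count_CD n.-1. Qed.

Lemma Cw_letters n : {subset Cw n <= [:: 1; 2]}.
Proof. by move=> x Cx; apply: (allP (CD_letters n.-1)); rewrite mem_cat Cx. Qed.

Import GRing.Theory Num.Theory.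
Local Open Scope ring_scope.

Lemma bin_add_bin_pred_ratio (F : numFieldType) (m k : nat) : k <> m ->
  ('C(m, k) + 'C(m - 1, k))%:R
    = ((2 * m)%N%:R - k%:R) / (m%:R - k%:R) * 'C(m - 1, k)%:R :> F.
Proof.
move=> /eqP neq_km; have [lt_mk | le_km] := ltnP m k.
  by rewrite (bin_small lt_mk) (@bin_small (m - 1)) ?mulr0 //; lia.
have mk_neq0 : m%:R - k%:R != 0 :> F.
  by rewrite -natrB // pnatr_eq0 subn_eq0 -ltnNge ltn_neqAle neq_km.
have bin_m : 'C(m, k)%:R = m%:R * 'C(m - 1, k)%:R / (m%:R - k%:R) :> F.
  apply: (canRL (mulfK mk_neq0)).
  by rewrite -natrB // -!natrM subn1 mul_bin_down mulnC.
by rewrite natrD bin_m natrM; field.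
Qed.

Theorem proposition2 (n k : nat) (hn : (1 <= n)%N) (hk : (1 <= k)%N) :
  [/\ occ_subseq (Cw n) (nseq k 1%N) = 'C(2 ^ n.-1, k),
      occ_subseq (Cw n) (nseq k 2%N) = 'C(2 ^ n.-1 - 1, k),
      occ_const_pattern (Cw n) k = ('C(2 ^ n.-1, k) + 'C(2 ^ n.-1 - 1, k))%N
    & k <> (2 ^ n.-1)%N ->
      (occ_const_pattern (Cw n) k)%:R =
        ((2 ^ n)%:R - k%:R) / ((2 ^ n.-1)%:R - k%:R) * ('C(2 ^ n.-1 - 1, k))%:R
        :> rat].
Proof.
have [ones twos] := count_Cw n.
have occ_const : occ_const_pattern (Cw n) k = ('C(2 ^ n.-1, k) + 'C(2 ^ n.-1 - 1, k))%N.
  by rewrite (@occ_const_pattern_two_letters _ 1 2) ?ones ?twos //; apply: Cw_letters.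
split; rewrite ?occ_subseq_nseq ?ones ?twos //.
by move=> neq_k; rewrite occ_const bin_add_bin_pred_ratio // -expnS prednK.
Qed.
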